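(* Let $G$ be a periodic group and let $x\in G$ be such that $[G,x]$ is a Chernikov group. Let $R$ be the radicable part of $[G,x]$ and assume that $[R,x]=\{1\}$. Then $R=\{1\}$.
   Context: For a subgroup $H$ and element $x$ of a group $G$, $[H,x]$ is the subgroup generated by all commutators $[a,x]=a^{-1}x^{-1}ax$ with $a\in H$. A group is radicable if every equation $y^s=a$ ($s$ a positive integer) has a solution in it. A Chernikov group $K$ has a radicable abelian normal subgroup $R$ (its radicable part, or finite residual) which is a direct product of finitely many Prüfer groups $C_{p^\infty}$ and with $K/R$ finite. *)

From Stdlib Require Import Arith.

Set Implicit Arguments.

Record Group := {
  carrier :> Type;
  gmul : carrier -> carrier -> carrier;
  ginv : carrier -> carrier;
  gone : carrier;
  gmulA : forall a b c, gmul a (gmul b c) = gmul (gmul a b) c;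
  gmul1l : forall a, gmul gone a = a;
  gmul1r : forall a, gmul a gone = a;
  gmulVl : forall a, gmul (ginv a) a = gone;
  gmulVr : forall a, gmul a (ginv a) = gone
}.

Section GroupDefs.
Variable G : Group.

Fixpoint gpow (g : G) (n : nat) : G :=
  match n with
  | 0 => gone G
  | S m => gmul G (gpow g m) g
  end.

Definition comm (a x : G) : G :=
  gmul G (gmul G (gmul G (ginv G a) (ginv G x)) a) x.

Definition subgroup (H : G -> Prop) : Prop :=
  H (gone G) /\ (forall a b, H a -> H b -> H (gmul G a b)) /\
  (forall a, H a -> H (ginv G a)).

Inductive gen (S : G -> Prop) : G -> Prop :=
  | gen_in : forall s, S s -> gen S s
  | gen_one : gen S (gone G)
  | gen_mul : forall a b, gen S a -> gen S b -> gen S (gmul G a b)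
  | gen_inv : forall a, gen S a -> gen S (ginv G a).

Definition commx (H : G -> Prop) (x : G) : G -> Prop :=
  gen (fun c => exists a, H a /\ c = comm a x).

Definition whole : G -> Prop := fun _ => True.

Definition trivial_sub (H : G -> Prop) : Prop := forall g, H g <-> g = gone G.

Definition periodic : Prop := forall g : G, exists n, 0 < n /\ gpow g n = gone G.

Definition is_prime (p : nat) : Prop :=
  1 < p /\ forall d, Nat.divide d p -> d = 1 \/ d = p.

(* P is a Pruefer p-group C_{p^oo}: the union of the chain of cyclic groups
   <c_1> < <c_2> < ... with c_1 <> 1, c_1^p = 1, c_(n+1)^p = c_n. *)
Definition pruefer (p : nat) (P : G -> Prop) : Prop :=
  is_prime p /\
  exists c : nat -> G,
    c 0 = gone G /\ c 1 <> gone G /\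
    (forall n, gpow (c (S n)) p = c n) /\
    (forall g, P g <-> exists n k, g = gpow (c n) k).

Fixpoint gprod (f : nat -> G) (n : nat) : G :=
  match n with
  | 0 => gone G
  | S m => gmul G (gprod f m) (f m)
  end.

Definition direct_prod_pruefer (R : G -> Prop) : Prop :=
  exists (n : nat) (p : nat -> nat) (P : nat -> G -> Prop),
    (forall i, i < n -> subgroup (P i) /\ pruefer (p i) (P i)) /\
    (forall i j a b, i < n -> j < n -> P i a -> P j b ->
        gmul G a b = gmul G b a) /\
    (forall g, R g <-> exists f : nat -> G,
        (forall i, i < n -> P i (f i)) /\ g = gprod f n) /\
    (forall f f' : nat -> G,
        (forall i, i < n -> P i (f i)) -> (forall i, i < n -> P i (f' i)) ->
        gprod f n = gprod f' n -> forall i, i < n -> f i = f' i).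

Definition normal_in (R K : G -> Prop) : Prop :=
  forall r k, R r -> K k -> R (gmul G (gmul G (ginv G k) r) k).

Definition abelian_sub (R : G -> Prop) : Prop :=
  forall a b, R a -> R b -> gmul G a b = gmul G b a.

Definition radicable (R : G -> Prop) : Prop :=
  forall a s, R a -> 0 < s -> exists y, R y /\ gpow y s = a.

Definition finite_index (R K : G -> Prop) : Prop :=
  exists (m : nat) (k : nat -> G),
    (forall j, j < m -> K (k j)) /\
    (forall g, K g -> exists j r, j < m /\ R r /\ g = gmul G (k j) r).

(* R is the radicable part of the Chernikov group K: a radicable abelian
   normal subgroup of K, direct product of finitely many Pruefer groups,
   with K/R finite.  (Such R is unique when it exists.) *)
Definition chernikov_radicable_part (K R : G -> Prop) : Prop :=
  subgroup R /\ (forall g, R g -> K g) /\ normal_in R K /\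
  abelian_sub R /\ radicable R /\ direct_prod_pruefer R /\ finite_index R K.

Definition chernikov (K : G -> Prop) : Prop :=
  subgroup K /\ exists R, chernikov_radicable_part K R.

End GroupDefs.

(* Write K = [G,x].  Since R has finite index in K, a fixed power k^N of every
   k in K lies in R; as R is radicable every element of R is such a power, and
   K is normal in G, so R is normal in G.  Hence every conjugate of x
   centralizes R, and so does K, which is generated by the products x^-a x.
   Thus R is central of finite index in L = K<x>, and the transfer V : L -> R
   satisfies V r = r^q.  If x^n = 1, the generators x^-a x of K are products of
   two elements of L of order dividing n, so V(K) has exponent dividing n; for
   r in R, writing r = y^(qn) with y in R gives r = V(y)^n = 1. *)

From Stdlib Require Import Arith Lia List Permutation Classical ClassicalEpsilon.

Section Groups.
Context {G : Group}.

Local Infix "**" := (gmul G) (at level 40, left associativity).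
Local Notation inv := (ginv G).
Local Notation one := (gone G).
Local Notation "a ^+ n" := (gpow G a n) (at level 30, right associativity).
Local Notation conjg a g := (inv g ** a ** g).

Lemma mulgA (a b c : G) : a ** (b ** c) = a ** b ** c.
Proof. apply gmulA. Qed.

Lemma mul1g (a : G) : one ** a = a.
Proof. apply gmul1l. Qed.

Lemma mulg1 (a : G) : a ** one = a.
Proof. apply gmul1r. Qed.

Lemma mulVg (a : G) : inv a ** a = one.
Proof. apply gmulVl. Qed.

Lemma mulgV (a : G) : a ** inv a = one.
Proof. apply gmulVr. Qed.

Lemma mulKg (a b : G) : inv a ** (a ** b) = b.
Proof. rewrite mulgA, mulVg. apply mul1g. Qed.

Lemma mulKVg (a b : G) : a ** (inv a ** b) = b.
Proof. rewrite mulgA, mulgV. apply mul1g. Qed.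

Lemma mulgI (a b c : G) : a ** b = a ** c -> b = c.
Proof. intros E. rewrite <- (mulKg a b), E. apply mulKg. Qed.

Lemma invg_unique (a b : G) : a ** b = one -> inv a = b.
Proof. intros E. rewrite <- (mulg1 (inv a)), <- E. apply mulKg. Qed.

Lemma invMg (a b : G) : inv (a ** b) = inv b ** inv a.
Proof. apply invg_unique. rewrite <- mulgA, mulKVg. apply mulgV. Qed.

Lemma invgK (a : G) : inv (inv a) = a.
Proof. apply invg_unique, mulVg. Qed.

Lemma invg1 : inv one = one.
Proof. apply invg_unique, mul1g. Qed.

Ltac gsimpl :=
  repeat progress rewrite ?invMg, ?invgK, ?invg1, <- ?mulgA, ?mul1g, ?mulg1,
    ?mulgV, ?mulVg, ?mulKg, ?mulKVg.

Lemma commute_mul (a b r : G) :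
  a ** r = r ** a -> b ** r = r ** b -> a ** b ** r = r ** (a ** b).
Proof. intros Ea Eb. rewrite <- mulgA, Eb, mulgA, Ea, mulgA. reflexivity. Qed.

Lemma commuteV (a b : G) : a ** b = b ** a -> a ** inv b = inv b ** a.
Proof. intros E. apply (mulgI b). rewrite mulgA, <- E. gsimpl. reflexivity. Qed.

Lemma commute_of_comm1 (a b : G) : comm G a b = one -> a ** b = b ** a.
Proof.
  unfold comm. intros E. apply (mulgI (inv a ** inv b)).
  gsimpl. rewrite <- E. gsimpl. reflexivity.
Qed.

Lemma expgD (a : G) i j : a ^+ (i + j) = a ^+ i ** a ^+ j.
Proof.
  induction j as [|j IH]; simpl.
  - rewrite Nat.add_0_r, mulg1. reflexivity.
  - rewrite Nat.add_succ_r. simpl. rewrite IH. symmetry. apply mulgA.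
Qed.

Lemma expgM (a : G) i j : a ^+ (i * j) = (a ^+ i) ^+ j.
Proof.
  induction j as [|j IH]; simpl.
  - rewrite Nat.mul_0_r. reflexivity.
  - rewrite Nat.mul_succ_r, expgD, IH. reflexivity.
Qed.

Lemma expg1n n : one ^+ n = one.
Proof. induction n as [|n IH]; simpl; [|rewrite IH, mul1g]; reflexivity. Qed.

Lemma commute_expg (a b : G) n : a ** b = b ** a -> a ^+ n ** b = b ** a ^+ n.
Proof.
  intros E. induction n as [|n IH]; simpl.
  - rewrite mul1g, mulg1. reflexivity.
  - rewrite <- mulgA, E, mulgA, IH, mulgA. reflexivity.
Qed.

Lemma expgMn (a b : G) n : a ** b = b ** a -> (a ** b) ^+ n = a ^+ n ** b ^+ n.
Proof.
  intros E. induction n as [|n IH]; simpl.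
  - rewrite mul1g. reflexivity.
  - rewrite IH, (mulgA (a ^+ n ** b ^+ n)), <- (mulgA (a ^+ n)),
      (commute_expg b a n (eq_sym E)).
    gsimpl. reflexivity.
Qed.

Lemma expgVn (a : G) n : (inv a) ^+ n = inv (a ^+ n).
Proof.
  induction n as [|n IH]; simpl.
  - rewrite invg1. reflexivity.
  - rewrite IH, <- invMg, commute_expg; reflexivity.
Qed.

Lemma conjXg (a g : G) n : (conjg a g) ^+ n = conjg (a ^+ n) g.
Proof.
  induction n as [|n IH]; simpl.
  - gsimpl. reflexivity.
  - rewrite IH. gsimpl. reflexivity.
Qed.

Lemma invg_expg (a : G) n : 0 < n -> a ^+ n = one -> inv a = a ^+ (n - 1).
Proof.
  intros n_pos E. apply invg_unique.
  rewrite <- commute_expg by reflexivity.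
  change (a ^+ (n - 1) ** a) with (a ^+ S (n - 1)).
  replace (S (n - 1)) with n by lia. exact E.
Qed.

Lemma expg_mod (a : G) n e : a ^+ n = one -> a ^+ e = a ^+ (e mod n).
Proof.
  intros E. rewrite (Nat.div_mod_eq e n) at 1.
  rewrite expgD, expgM, E, expg1n, mul1g. reflexivity.
Qed.

Lemma expg_closed (M : G -> Prop) :
  M one -> (forall a b, M a -> M b -> M (a ** b)) ->
  forall a n, M a -> M (a ^+ n).
Proof. intros M1 MM a n Ma. induction n; simpl; auto. Qed.

Lemma subgroup_expg (K : G -> Prop) a n : subgroup G K -> K a -> K (a ^+ n).
Proof. intros [K1 [KM _]]. apply expg_closed; assumption. Qed.

Lemma gen_subgroup (S : G -> Prop) : subgroup G (gen G S).
Proof. split; [apply gen_one | split; [apply gen_mul | apply gen_inv]]. Qed.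

Lemma gen_sub (S S' : G -> Prop) :
  (forall s, S s -> gen G S' s) -> forall a, gen G S a -> gen G S' a.
Proof. intros HS a Ha. induction Ha; auto using gen_one, gen_mul, gen_inv. Qed.

Fixpoint lprod (s : list G) : G :=
  match s with
  | nil => one
  | a :: s' => a ** lprod s'
  end.

Lemma lprod_map_const {A : Type} (z : G) (s : list A) :
  lprod (map (fun _ => z) s) = z ^+ length s.
Proof.
  induction s as [|a s IH]; simpl; [reflexivity|].
  rewrite IH. symmetry. apply commute_expg. reflexivity.
Qed.

Section AbelianProducts.
Variable Z : G -> Prop.
Hypothesis Z_subgroup : subgroup G Z.
Hypothesis Z_abelian : abelian_sub G Z.

Lemma lprod_closed s : Forall Z s -> Z (lprod s).
Proof. destruct Z_subgroup as [Z1 [ZM _]]. induction 1; simpl; auto. Qed.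

Lemma lprod_perm s s' : Permutation s s' -> Forall Z s -> lprod s = lprod s'.
Proof.
  induction 1 as [| a s s' _ IH | a b s | s s' s'' P IH1 _ IH2];
    simpl; intros HZ.
  - reflexivity.
  - inversion HZ. rewrite IH; auto.
  - inversion HZ as [|? ? Hb HZ']. inversion HZ'.
    rewrite !mulgA, (Z_abelian b a); auto.
  - rewrite IH1 by exact HZ. apply IH2. rewrite <- P. exact HZ.
Qed.

Lemma lprod_map_mul {A : Type} (f g : A -> G) (s : list A) :
  (forall a, In a s -> Z (f a)) -> (forall a, In a s -> Z (g a)) ->
  lprod (map (fun a => f a ** g a) s) = lprod (map f s) ** lprod (map g s).
Proof.
  induction s as [|a s IH]; simpl; intros Hf Hg.
  - rewrite mul1g. reflexivity.
  - assert (Zs : Z (lprod (map f s))).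
    { apply lprod_closed, Forall_forall. intros b Hb.
      apply in_map_iff in Hb as [c [<- Hc]]. auto. }
    rewrite IH by auto. gsimpl.
    rewrite (mulgA (g a)), (Z_abelian (g a) _ (Hg a (or_introl eq_refl)) Zs).
    gsimpl. reflexivity.
Qed.

End AbelianProducts.

Definition coset_cover (R H : G -> Prop) (s : list G) : Prop :=
  (forall t, In t s -> H t) /\
  (forall h, H h -> exists t r, In t s /\ R r /\ h = t ** r).

Lemma finite_index_cover (R K : G -> Prop) :
  finite_index G R K -> exists s, coset_cover R K s.
Proof.
  intros [m [t [Ht cover]]]. exists (map t (seq 0 m)). split.
  - intros a Ha. apply in_map_iff in Ha as [j [<- Hj]].
    apply in_seq in Hj. apply Ht. lia.
  - intros k Hk. destruct (cover k Hk) as [j [r [Hj [Hr ->]]]].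
    exists (t j), r. repeat split; auto. apply in_map, in_seq. lia.
Qed.

Lemma expg_diff_in (R : G -> Prop) (k t r r' : G) i i' :
  subgroup G R -> R r -> R r' -> i <= i' ->
  k ^+ i = t ** r -> k ^+ i' = t ** r' -> R (k ^+ (i' - i)).
Proof.
  intros [_ [RM RV]] Hr Hr' Hii E E'.
  assert (Ediff : k ^+ (i' - i) = inv r ** r').
  { apply (mulgI (k ^+ i)). rewrite <- expgD.
    replace (i + (i' - i)) with i' by lia.
    rewrite E, E'. gsimpl. reflexivity. }
  rewrite Ediff. auto.
Qed.

Lemma expg_in_of_cover (R : G -> Prop) (s : list G) (k : G) :
  subgroup G R ->
  (forall i, exists t r, In t s /\ R r /\ k ^+ i = t ** r) ->
  exists d, 0 < d <= length s /\ R (k ^+ d).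
Proof.
  intros R_sub cover.
  destruct (Permutation_pigeonhole_rel
              (fun i t => exists r, R r /\ k ^+ i = t ** r)
              (l1 := seq 0 (S (length s))) (l2 := s))
    as [i [i' [l [P [t [_ [[r [Hr E]] [r' [Hr' E']]]]]]]]].
  - apply Forall_forall. intros i _.
    destruct (cover i) as [t [r [Ht [Hr E]]]].
    apply Exists_exists. exists t. eauto.
  - rewrite length_seq. lia.
  - assert (Hne : i <> i').
    { pose proof (Permutation_NoDup P (seq_NoDup _ _)) as ND.
      inversion ND as [|? ? Hnot]. intros <-. apply Hnot. left. reflexivity. }
    assert (Hin : forall j, In j (i :: i' :: l) -> j < S (length s)).
    { intros j Hj. apply (Permutation_in _ (Permutation_sym P)), in_seq in Hj.
      lia. }
    assert (Hi := Hin i (or_introl eq_refl)).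
    assert (Hi' := Hin i' (or_intror (or_introl eq_refl))).
    destruct (Nat.lt_gt_cases i i') as [[lt | gt] _]; [exact Hne| |].
    + exists (i' - i). split; [lia|].
      apply (expg_diff_in R k t r r'); auto; lia.
    + exists (i - i'). split; [lia|].
      apply (expg_diff_in R k t r' r); auto; lia.
Qed.

Lemma divide_fact d m : 0 < d <= m -> Nat.divide d (fact m).
Proof.
  induction m as [|m IH]; intros Hd; [lia|].
  change (fact (S m)) with (S m * fact m).
  destruct (Nat.eq_dec d (S m)) as [-> | ne].
  - apply Nat.divide_mul_l, Nat.divide_refl.
  - apply Nat.divide_mul_r, IH. lia.
Qed.

Lemma finite_index_expg (R K : G -> Prop) s :
  subgroup G R -> subgroup G K -> coset_cover R K s ->
  exists N, 0 < N /\ forall k, K k -> R (k ^+ N).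
Proof.
  intros R_sub K_sub [_ cover]. exists (fact (length s)). split.
  - apply lt_O_fact.
  - intros k Hk. destruct (expg_in_of_cover R s k R_sub) as [d [Hd Rd]].
    { intros i. apply cover, subgroup_expg; assumption. }
    destruct (divide_fact d (length s) Hd) as [c ->].
    rewrite Nat.mul_comm, expgM. apply subgroup_expg; assumption.
Qed.

Lemma normal_of_radicable (R K : G -> Prop) N :
  radicable G R -> 0 < N -> (forall r, R r -> K r) ->
  normal_in G K (whole G) -> (forall k, K k -> R (k ^+ N)) ->
  normal_in G R (whole G).
Proof.
  intros R_rad N_pos R_K K_normal K_pow r g Hr _.
  destruct (R_rad r N Hr N_pos) as [y [Hy <-]].
  rewrite <- conjXg. apply K_pow, K_normal; [apply R_K; exact Hy | exact I].
Qed.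

Section Transfer.
Variables H Z : G -> Prop.
Hypothesis H_one : H one.
Hypothesis H_mul : forall a b, H a -> H b -> H (a ** b).
Hypothesis Z_subgroup : subgroup G Z.
Hypothesis Z_sub : forall z, Z z -> H z.
Hypothesis Z_central : forall z h, Z z -> H h -> z ** h = h ** z.

Local Notation same_coset a b := (Z (inv a ** b)).

Lemma H_expg a k : H a -> H (a ^+ k).
Proof. apply expg_closed; assumption. Qed.

Lemma Z_abelian : abelian_sub G Z.
Proof. intros a b Ha Hb. apply Z_central; auto. Qed.

Lemma same_coset_refl a : same_coset a a.
Proof. rewrite mulVg. apply Z_subgroup. Qed.

Lemma same_coset_sym a b : same_coset a b -> same_coset b a.
Proof.
  destruct Z_subgroup as [_ [_ ZV]]. intros E.
  generalize (ZV _ E). rewrite invMg, invgK. auto.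
Qed.

Lemma same_coset_trans a b c :
  same_coset a b -> same_coset b c -> same_coset a c.
Proof.
  destruct Z_subgroup as [_ [ZM _]]. intros Eab Ebc.
  generalize (ZM _ _ Eab Ebc). gsimpl. auto.
Qed.

(* Right multiplication by h conjugates inv a ** b by h, and Z is central in H. *)
Lemma same_coset_mulr a b h :
  H h -> same_coset (a ** h) (b ** h) -> same_coset a b.
Proof.
  intros Hh E. rewrite invMg in E.
  assert (Eab : inv a ** b = h ** (inv h ** inv a ** (b ** h)) ** inv h)
    by (gsimpl; reflexivity).
  rewrite Eab, <- (Z_central _ h E Hh). gsimpl. revert E. gsimpl. auto.
Qed.

Lemma exists_transversal (s : list G) :
  exists T, incl T s /\ NoDup T /\
    (forall a, In a s -> exists t, In t T /\ same_coset t a) /\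
    (forall t t', In t T -> In t' T -> same_coset t t' -> t = t').
Proof.
  induction s as [|a s (T & T_s & T_nodup & T_cover & T_distinct)].
  - exists nil. repeat split.
    + intros t [].
    + constructor.
    + intros a [].
    + intros t t' [].
  - destruct (classic (exists t, In t T /\ same_coset t a)) as [old | new].
    + exists T. repeat split; auto.
      * apply incl_tl. exact T_s.
      * intros b [<- | Hb]; auto.
    + exists (a :: T). repeat split.
      * apply incl_cons; [left; reflexivity | apply incl_tl; exact T_s].
      * constructor; [|exact T_nodup]. intros Ha. apply new.
        exists a. split; [exact Ha | apply same_coset_refl].
      * intros b [<- | Hb].
        -- exists a. split; [left; reflexivity | apply same_coset_refl].
        -- destruct (T_cover b Hb) as [t [Ht E]]. exists t. split; [right|]; auto.
      * intros t t' [<- | Ht] [<- | Ht'] E; auto; exfalso; apply new.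
        -- exists t'. split; [exact Ht' | apply same_coset_sym; exact E].
        -- exists t. split; assumption.
Qed.

Section Transversal.
Variable T : list G.
Hypothesis T_H : forall t, In t T -> H t.
Hypothesis T_nodup : NoDup T.
Hypothesis T_cover : forall h, H h -> exists t, In t T /\ same_coset t h.
Hypothesis T_distinct :
  forall t t', In t T -> In t' T -> same_coset t t' -> t = t'.

Definition coset_rep (a : G) : G :=
  epsilon (inhabits one) (fun t => In t T /\ same_coset t a).

Lemma coset_rep_spec a : H a -> In (coset_rep a) T /\ same_coset (coset_rep a) a.
Proof. intros Ha. unfold coset_rep. apply epsilon_spec, T_cover, Ha. Qed.

Lemma coset_rep_eq a t : H a -> In t T -> same_coset t a -> coset_rep a = t.
Proof.
  intros Ha Ht E. destruct (coset_rep_spec a Ha) as [Hr Er].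
  apply T_distinct; [exact Hr | exact Ht |].
  apply same_coset_trans with a; [exact Er | apply same_coset_sym; exact E].
Qed.

Definition transfer_factor (h t : G) : G := inv (coset_rep (t ** h)) ** (t ** h).

Lemma transfer_factor_in h t : H h -> In t T -> Z (transfer_factor h t).
Proof. intros Hh Ht. apply coset_rep_spec. auto. Qed.

Lemma transfer_factor_mul h h' t : H h -> H h' -> In t T ->
  transfer_factor (h ** h') t =
  transfer_factor h' (coset_rep (t ** h)) ** transfer_factor h t.
Proof.
  intros Hh Hh' Ht.
  assert (Hu : In (coset_rep (t ** h)) T) by (apply coset_rep_spec; auto).
  assert (Zc := transfer_factor_in h t Hh Ht).
  assert (E : t ** (h ** h') = coset_rep (t ** h) ** h' ** transfer_factor h t).
  { rewrite <- mulgA, <- (Z_central _ h' Zc Hh'). unfold transfer_factor.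
    gsimpl. reflexivity. }
  assert (Erep : coset_rep (t ** (h ** h')) = coset_rep (coset_rep (t ** h) ** h')).
  { destruct (coset_rep_spec (coset_rep (t ** h) ** h')) as [Hr Er]; auto.
    apply coset_rep_eq; auto.
    rewrite E, mulgA. apply Z_subgroup; assumption. }
  unfold transfer_factor at 1. rewrite Erep, E. unfold transfer_factor.
  gsimpl. reflexivity.
Qed.

Lemma coset_rep_perm h : H h -> Permutation (map (fun t => coset_rep (t ** h)) T) T.
Proof.
  intros Hh. apply NoDup_Permutation_bis.
  - apply NoDup_map_NoDup_ForallPairs; [|exact T_nodup].
    intros t t' Ht Ht' E. apply T_distinct; auto.
    apply same_coset_mulr with h; [exact Hh|].
    destruct (coset_rep_spec (t ** h)) as [_ Et]; auto.
    destruct (coset_rep_spec (t' ** h)) as [_ Et']; auto.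
    rewrite E in Et. apply same_coset_trans with (coset_rep (t' ** h));
      [apply same_coset_sym|]; assumption.
  - rewrite length_map. reflexivity.
  - intros u Hu. apply in_map_iff in Hu as [t [<- Ht]].
    apply coset_rep_spec. auto.
Qed.

Definition transfer (h : G) : G := lprod (map (transfer_factor h) T).

Lemma transfer_in h : H h -> Z (transfer h).
Proof.
  intros Hh. unfold transfer. apply lprod_closed; [exact Z_subgroup|].
  apply Forall_forall. intros c Hc. apply in_map_iff in Hc as [t [<- Ht]].
  apply transfer_factor_in; assumption.
Qed.

Lemma transfer_mul h h' : H h -> H h' -> transfer (h ** h') = transfer h ** transfer h'.
Proof.
  intros Hh Hh'. unfold transfer.
  rewrite (map_ext_in _ (fun t => transfer_factor h' (coset_rep (t ** h)) **
                                  transfer_factor h t))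
    by (intros t Ht; apply transfer_factor_mul; assumption).
  rewrite (lprod_map_mul Z Z_subgroup Z_abelian); cycle 1.
  - intros t Ht. apply transfer_factor_in; [|apply coset_rep_spec]; auto.
  - intros t Ht. apply transfer_factor_in; assumption.
  - rewrite <- (map_map (fun t => coset_rep (t ** h))).
    rewrite (lprod_perm Z Z_abelian _ _
               (Permutation_map _ (coset_rep_perm h Hh))).
    + apply Z_abelian; apply transfer_in; assumption.
    + apply Forall_forall. intros c Hc.
      apply in_map_iff in Hc as [u [<- Hu]]. apply in_map_iff in Hu as [t [<- Ht]].
      apply transfer_factor_in; [|apply coset_rep_spec]; auto.
Qed.

Lemma transfer_of_in z : Z z -> transfer z = z ^+ length T.
Proof.
  intros Hz. unfold transfer. rewrite <- (lprod_map_const z T). f_equal.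
  apply map_ext_in. intros t Ht. unfold transfer_factor.
  rewrite (coset_rep_eq (t ** z) t); auto.
  - apply mulKg.
  - rewrite mulKg. exact Hz.
Qed.

End Transversal.

Lemma exists_transfer s : coset_cover Z H s ->
  exists (V : G -> G) (q : nat), 0 < q /\ (forall h, H h -> Z (V h)) /\
    (forall h h', H h -> H h' -> V (h ** h') = V h ** V h') /\
    (forall z, Z z -> V z = z ^+ q).
Proof.
  intros [s_H s_cover].
  destruct (exists_transversal s) as (T & T_s & T_nodup & T_cover & T_distinct).
  assert (T_cover_H : forall h, H h -> exists t, In t T /\ same_coset t h).
  { intros h Hh. destruct (s_cover h Hh) as [a [r [Ha [Hr ->]]]].
    destruct (T_cover a Ha) as [t [Ht E]]. exists t. split; [exact Ht|].
    apply same_coset_trans with a; [exact E | rewrite mulKg; exact Hr]. }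
  assert (T_H : forall t, In t T -> H t) by auto.
  exists (transfer T), (length T). repeat split.
  - destruct (T_cover_H one H_one) as [t [Ht _]].
    destruct T; [destruct Ht | simpl; lia].
  - intros h Hh. apply transfer_in; auto.
  - intros h h' Hh Hh'. apply transfer_mul; auto.
  - intros z Hz. apply transfer_of_in; auto.
Qed.

Lemma hom_torsion_gen (V : G -> G) n : 0 < n ->
  (forall h, H h -> Z (V h)) ->
  (forall h h', H h -> H h' -> V (h ** h') = V h ** V h') ->
  forall a, gen G (fun g => H g /\ g ^+ n = one) a ->
  H a /\ H (inv a) /\ V a ^+ n = one.
Proof.
  intros n_pos V_Z V_mul.
  assert (V_one : V one = one).
  { apply (mulgI (V one)). rewrite <- V_mul, mul1g, mulg1; auto. }
  assert (V_expg : forall h k, H h -> V (h ^+ k) = V h ^+ k).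
  { intros h k Hh. induction k as [|k IH]; simpl; [exact V_one|].
    rewrite V_mul, IH; auto using H_expg. }
  induction 1 as [g [Hg gn] | | a b _ [Ha [Ha' Va]] _ [Hb [Hb' Vb]] | a _ [Ha [Ha' Va]]].
  - rewrite (invg_expg g n n_pos gn), <- V_expg, gn by exact Hg.
    auto using H_expg.
  - rewrite invg1, V_one, expg1n. auto.
  - rewrite invMg, V_mul, expgMn, Va, Vb, mul1g by auto using Z_abelian.
    auto.
  - assert (V_inv : inv (V a) = V (inv a)).
    { apply invg_unique. rewrite <- V_mul, mulgV; auto. }
    rewrite invgK, <- V_inv, expgVn, Va, invg1. auto.
Qed.

Lemma radicable_central_trivial s n :
  coset_cover Z H s -> radicable G Z -> 0 < n ->
  (forall z, Z z -> gen G (fun g => H g /\ g ^+ n = one) z) ->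
  forall z, Z z -> z = one.
Proof.
  intros cover Z_rad n_pos Z_torsion z Hz.
  destruct (exists_transfer s cover) as (V & q & q_pos & V_Z & V_mul & V_pow).
  destruct (Z_rad z (q * n) Hz) as [y [Hy <-]]; [lia|].
  rewrite expgM, <- V_pow by exact Hy.
  apply (hom_torsion_gen V n n_pos V_Z V_mul), Z_torsion, Hy.
Qed.

End Transfer.

Definition join_cycle (K : G -> Prop) (x : G) : G -> Prop :=
  fun h => exists k e, K k /\ h = k ** x ^+ e.

Section JoinCycle.
Variables (K : G -> Prop) (x : G).
Hypothesis K_subgroup : subgroup G K.
Hypothesis K_normal : normal_in G K (whole G).

Lemma join_cycle_one : join_cycle K x one.
Proof. exists one, 0. split; [apply K_subgroup | symmetry; apply mul1g]. Qed.

Lemma join_cycle_mul a b :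
  join_cycle K x a -> join_cycle K x b -> join_cycle K x (a ** b).
Proof.
  intros [k [e [Hk ->]]] [k' [e' [Hk' ->]]].
  exists (k ** conjg k' (inv (x ^+ e))), (e + e'). split.
  - apply K_subgroup; [exact Hk | apply K_normal; [exact Hk' | exact I]].
  - rewrite expgD. gsimpl. reflexivity.
Qed.

Lemma join_cycle_of_sub k : K k -> join_cycle K x k.
Proof. intros Hk. exists k, 0. split; [exact Hk | symmetry; apply mulg1]. Qed.

Lemma join_cycle_expg e : join_cycle K x (x ^+ e).
Proof. exists one, e. split; [apply K_subgroup | symmetry; apply mul1g]. Qed.

Lemma join_cycle_gen : join_cycle K x x.
Proof. exists one, 1. split; [apply K_subgroup | simpl; rewrite !mul1g; reflexivity]. Qed.

Lemma join_cycle_central (R : G -> Prop) :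
  (forall k r, K k -> R r -> k ** r = r ** k) ->
  (forall r, R r -> r ** x = x ** r) ->
  forall r h, R r -> join_cycle K x h -> r ** h = h ** r.
Proof.
  intros K_R x_R r h Hr [k [e [Hk ->]]]. symmetry.
  apply commute_mul; [auto|]. apply commute_expg. symmetry. auto.
Qed.

Lemma join_cycle_cover (R : G -> Prop) s n :
  coset_cover R K s -> 0 < n -> x ^+ n = one ->
  (forall r, R r -> r ** x = x ** r) ->
  coset_cover R (join_cycle K x)
    (flat_map (fun t => map (fun e => t ** x ^+ e) (seq 0 n)) s).
Proof.
  intros [s_K s_cover] n_pos x_n x_R. split.
  - intros a Ha. apply in_flat_map in Ha as [t [Ht Ha]].
    apply in_map_iff in Ha as [e [<- _]]. exists t, e. auto.
  - intros h [k [e [Hk ->]]]. destruct (s_cover k Hk) as [t [r [Ht [Hr ->]]]].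
    exists (t ** x ^+ (e mod n)), r. repeat split; auto.
    + apply in_flat_map. exists t. split; [exact Ht|].
      apply in_map_iff. exists (e mod n). split; [reflexivity|].
      apply in_seq. assert (e mod n < n) by (apply Nat.mod_upper_bound; lia). lia.
    + rewrite <- (expg_mod x n e x_n), <- !mulgA, commute_expg; [reflexivity|]. symmetry. auto.
Qed.

End JoinCycle.

Section CommutatorSubgroup.
Variable x : G.
Local Notation K := (commx G (whole G) x).

Lemma comm_in_commx a : K (comm G a x).
Proof. apply gen_in. exists a. split; [exact I | reflexivity]. Qed.

Lemma commx_normal : normal_in G K (whole G).
Proof.
  intros k g Hk _.
  induction Hk as [c [a [_ ->]] | | a b _ IHa _ IHb | a _ IHa].
  - replace (conjg (comm G a x) g) with (comm G (a ** g) x ** inv (comm G g x)).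
    + apply gen_mul; [|apply gen_inv]; apply comm_in_commx.
    + unfold comm. gsimpl. reflexivity.
  - rewrite mulg1, mulVg. apply gen_one.
  - replace (conjg (a ** b) g) with (conjg a g ** conjg b g) by (gsimpl; reflexivity).
    apply gen_mul; assumption.
  - replace (conjg (inv a) g) with (inv (conjg a g)) by (gsimpl; reflexivity).
    apply gen_inv; assumption.
Qed.

Lemma commute_of_commx_trivial (R : G -> Prop) :
  trivial_sub G (commx G R x) -> forall r, R r -> r ** x = x ** r.
Proof.
  intros R_x r Hr. apply commute_of_comm1, R_x, gen_in. exists r. auto.
Qed.

Lemma commx_centralizes (R : G -> Prop) :
  normal_in G R (whole G) -> (forall r, R r -> r ** x = x ** r) ->
  forall k r, K k -> R r -> k ** r = r ** k.
Proof.
  intros R_normal x_R k r Hk Hr.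
  assert (conj_x_R : forall g, conjg (inv x) g ** r = r ** conjg (inv x) g).
  { intros g. assert (Hr' : R (g ** r ** inv g)).
    { generalize (R_normal r (inv g) Hr I). rewrite invgK. auto. }
    replace (conjg (inv x) g ** r) with (inv g ** (inv x ** (g ** r ** inv g)) ** g)
      by (gsimpl; reflexivity).
    rewrite <- (commuteV _ _ (x_R _ Hr')). gsimpl. reflexivity. }
  induction Hk as [c [a [_ ->]] | | a b _ IHa _ IHb | a _ IHa].
  - apply commute_mul; [apply conj_x_R | symmetry; auto].
  - rewrite mul1g, mulg1. reflexivity.
  - apply commute_mul; assumption.
  - symmetry. apply commuteV. symmetry. exact IHa.
Qed.

(* [a,x] = (x^-1)^a x, and both factors have order dividing n. *)
Lemma commx_sub_gen_torsion (L : G -> Prop) n :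
  (forall a b, L a -> L b -> L (a ** b)) -> (forall k, K k -> L k) ->
  L x -> L (inv x) -> x ^+ n = one ->
  forall k, K k -> gen G (fun g => L g /\ g ^+ n = one) k.
Proof.
  intros L_mul K_L L_x L_xV x_n. apply gen_sub.
  intros c [a [_ ->]].
  change (comm G a x) with (conjg (inv x) a ** x).
  apply gen_mul; apply gen_in; split; auto.
  - replace (conjg (inv x) a) with (comm G a x ** inv x) by (unfold comm; gsimpl; reflexivity).
    apply L_mul; [apply K_L, comm_in_commx | exact L_xV].
  - rewrite conjXg, expgVn, x_n, invg1. gsimpl. reflexivity.
Qed.

End CommutatorSubgroup.
End Groups.

Theorem lemma2p6 (G : Group) (x : G) (R : G -> Prop) :
  periodic G ->
  chernikov G (commx G (whole G) x) ->
  chernikov_radicable_part G (commx G (whole G) x) R ->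
  trivial_sub G (commx G R x) ->
  trivial_sub G R.
Proof.
  (* The Chernikov hypothesis is subsumed by the radicable-part hypothesis. *)
  intros G_periodic _ (R_sub & R_K & _ & _ & R_rad & _ & R_index) R_x.
  set (K := commx G (whole G) x) in *.
  assert (K_sub : subgroup G K) by apply gen_subgroup.
  assert (K_normal : normal_in G K (whole G)) by apply commx_normal.
  destruct (finite_index_cover R K R_index) as [s s_cover].
  destruct (finite_index_expg R K s R_sub K_sub s_cover) as [N [N_pos K_pow]].
  assert (R_normal := normal_of_radicable R K N R_rad N_pos R_K K_normal K_pow).
  assert (x_R := commute_of_commx_trivial x R R_x).
  assert (K_R := commx_centralizes x R R_normal x_R).
  destruct (G_periodic x) as [n [n_pos x_n]].
  set (L := join_cycle K x).
  assert (L_one : L (gone G)) by exact (join_cycle_one K x K_sub).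
  assert (L_mul := join_cycle_mul K x K_sub K_normal).
  assert (K_L : forall k, K k -> L k) by exact (join_cycle_of_sub K x).
  assert (R_L : forall r, R r -> L r) by auto.
  assert (R_central := join_cycle_central K x R K_R x_R).
  assert (L_cover := join_cycle_cover K x R s n s_cover n_pos x_n x_R).
  assert (R_torsion : forall r, R r -> gen G (fun g => L g /\ gpow G g n = gone G) r).
  { intros r Hr. apply (commx_sub_gen_torsion x L n L_mul K_L); auto.
    - exact (join_cycle_gen K x K_sub).
    - rewrite (invg_expg x n n_pos x_n). apply join_cycle_expg, K_sub.
    - apply R_K, Hr. }
  intros g. split; [| intros ->; apply R_sub].
  exact (radicable_central_trivial L R L_one L_mul R_sub R_L R_central _ n
           L_cover R_rad n_pos R_torsion g).
Qed.
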